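(* Let $1\to B\to A\xrightarrow{\pi}H\to1$ be a central exact sequence of Hopf algebras such that $A$ is noetherian. If $\mathcal{HZ}(H)=k$, then $B=\mathcal{HZ}(A)$.
   Context: Hopf algebras over a field $k$, with bijective antipode. A sequence $1\to B\xrightarrow{\iota}A\xrightarrow{\pi}H\to1$ of Hopf algebra maps is exact if $\iota$ is injective, $\pi$ surjective, $\operatorname{Ker}\pi=AB^+$ ($B^+=\operatorname{Ker}\varepsilon$) and $B={}^{\mathrm{co}\,\pi}A$; it is central if $B$ is central in $A$. $\mathcal{HZ}(A)$ denotes the Hopf center of $A$, i.e. its maximal central Hopf subalgebra. *)

(* Tensors V (x) W are represented by finite formal sums (seq (V * W));
   two representatives denote the same tensor iff they have the same image
   under every bilinear map into every k-vector space (i.e. the universal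
   property of the tensor product). *)
From HB Require Import structures.
From mathcomp Require Import all_boot all_order all_algebra.
Set Implicit Arguments. Unset Strict Implicit. Unset Printing Implicit Defensive.
Import Order.TTheory GRing.Theory.
Local Open Scope ring_scope.

Section Defs.
Variable k : fieldType.

Definition lin_map (V W : lmodType k) (f : V -> W) : Prop :=
  forall (c : k) (u v : V), f (c *: u + v) = c *: f u + f v.

Definition bilin (V W U : lmodType k) (f : V -> W -> U) : Prop :=
  (forall y, lin_map (fun x => f x y)) /\ (forall x, lin_map (f x)).

Definition trilin (V W X U : lmodType k) (f : V -> W -> X -> U) : Prop :=
  (forall y z, lin_map (fun x => f x y z)) /\
  (forall x z, lin_map (fun y => f x y z)) /\
  (forall x y, lin_map (f x y)).

Definition teq (V W : lmodType k) (s t : seq (V * W)) : Prop :=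
  forall (U : lmodType k) (f : V -> W -> U), bilin f ->
    \sum_(p <- s) f p.1 p.2 = \sum_(p <- t) f p.1 p.2.

Definition teq3 (V W X : lmodType k) (s t : seq ((V * W) * X)) : Prop :=
  forall (U : lmodType k) (f : V -> W -> X -> U), trilin f ->
    \sum_(p <- s) f p.1.1 p.1.2 p.2 = \sum_(p <- t) f p.1.1 p.1.2 p.2.

Record hopf (A : algType k) := Hopf {
  hdelta : A -> seq (A * A);
  heps : A -> k;
  hS : A -> A;
  delta_lin : forall (c : k) (a b : A),
    teq (hdelta (c *: a + b)) ([seq (c *: p.1, p.2) | p <- hdelta a] ++ hdelta b);
  delta_mul : forall a b : A,
    teq (hdelta (a * b)) [seq (p.1 * q.1, p.2 * q.2) | p <- hdelta a, q <- hdelta b];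
  delta_one : teq (hdelta 1) [:: (1, 1)];
  coassoc : forall a : A,
    teq3 [seq ((q.1, q.2), p.2) | p <- hdelta a, q <- hdelta p.1]
         [seq ((p.1, q.1), q.2) | p <- hdelta a, q <- hdelta p.2];
  eps_lin : forall (c : k) (a b : A), heps (c *: a + b) = c * heps a + heps b;
  eps_mul : forall a b : A, heps (a * b) = heps a * heps b;
  eps_one : heps 1 = 1;
  counit_l : forall a : A, \sum_(p <- hdelta a) heps p.1 *: p.2 = a;
  counit_r : forall a : A, \sum_(p <- hdelta a) heps p.2 *: p.1 = a;
  S_lin : lin_map hS;
  antipode_l : forall a : A, \sum_(p <- hdelta a) hS p.1 * p.2 = (heps a)%:A;
  antipode_r : forall a : A, \sum_(p <- hdelta a) p.1 * hS p.2 = (heps a)%:A;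
  S_bij : bijective hS
}.

(* Hopf algebra maps (bialgebra maps; they then commute with antipodes) *)
Definition hopf_map (A H : algType k) (hA : hopf A) (hH : hopf H) (f : A -> H) : Prop :=
  [/\ lin_map f,
      (forall a b : A, f (a * b) = f a * f b),
      f 1 = 1,
      (forall a : A, teq (hdelta hH (f a)) [seq (f p.1, f p.2) | p <- hdelta hA a])
    & (forall a : A, heps hH (f a) = heps hA a)].

Definition hopf_subalg (A : algType k) (hA : hopf A) (C : A -> Prop) : Prop :=
  [/\ C 1,
      (forall (c : k) (a b : A), C a -> C b -> C (c *: a + b)),
      (forall a b : A, C a -> C b -> C (a * b)),
      (forall a : A, C a -> C (hS hA a))
    & (forall a : A, C a -> exists t : seq (A * A),
          (forall p, p \in t -> C p.1 /\ C p.2) /\ teq (hdelta hA a) t)].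

Definition central_set (A : algType k) (C : A -> Prop) : Prop :=
  forall c a : A, C c -> c * a = a * c.

Definition is_hopf_center (A : algType k) (hA : hopf A) (C : A -> Prop) : Prop :=
  [/\ hopf_subalg hA C, central_set C
    & forall D : A -> Prop, hopf_subalg hA D -> central_set D ->
        forall a, D a -> C a].

Definition exact_seq (B A H : algType k) (hB : hopf B) (hA : hopf A) (hH : hopf H)
    (iota : B -> A) (pi : A -> H) : Prop :=
  [/\ hopf_map hB hA iota, hopf_map hA hH pi & injective iota] /\
  [/\
      (forall h : H, exists a : A, pi a = h),
      (* Ker pi = A iota(B^+) *)
      (forall a : A, pi a = 0 <->
         exists s : seq (A * B), all (fun p => heps hB p.2 == 0) s /\
                                a = \sum_(p <- s) p.1 * iota p.2)
    & (* iota(B) = A^{co pi} = { a | (id (x) pi) Delta(a) = a (x) 1 } *)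
      (forall a : A, (exists b : B, a = iota b) <->
         teq [seq (p.1, pi p.2) | p <- hdelta hA a] [:: (a, (1 : H))])].

Definition central_seq (B A : algType k) (iota : B -> A) : Prop :=
  forall (b : B) (a : A), iota b * a = a * iota b.

Definition left_ideal (A : algType k) (I : A -> Prop) : Prop :=
  [/\ I 0, (forall x y, I x -> I y -> I (x + y)) & (forall a x, I x -> I (a * x))].
Definition right_ideal (A : algType k) (I : A -> Prop) : Prop :=
  [/\ I 0, (forall x y, I x -> I y -> I (x + y)) & (forall a x, I x -> I (x * a))].

Definition left_noetherian (A : algType k) : Prop :=
  forall I : nat -> A -> Prop, (forall n, left_ideal (I n)) ->
    (forall n x, I n x -> I n.+1 x) ->
    exists N, forall n, (N <= n)%N -> forall x, I n x -> I N x.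
Definition right_noetherian (A : algType k) : Prop :=
  forall I : nat -> A -> Prop, (forall n, right_ideal (I n)) ->
    (forall n x, I n x -> I n.+1 x) ->
    exists N, forall n, (N <= n)%N -> forall x, I n x -> I N x.
Definition noetherian (A : algType k) : Prop := left_noetherian A /\ right_noetherian A.

End Defs.

(* B is a central Hopf subalgebra of A, so B is contained in HZ(A).  Conversely,
   if D is any central Hopf subalgebra of A, then pi(D) is a central Hopf
   subalgebra of H (centrality survives because pi is onto), hence pi(D) = k and
   pi(x) = eps(x) 1 on D.  For a in D this gives
   (id (x) pi) Delta(a) = sum a_1 (x) eps(a_2) 1 = a (x) 1, i.e. a lies in the
   coinvariants A^{co pi} = B. *)
From HB Require Import structures.
From mathcomp Require Import all_boot all_order all_algebra.
Import GRing.Theory.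
Local Open Scope ring_scope.
Set Implicit Arguments. Unset Strict Implicit.

Section HopfMaps.
Variable k : fieldType.

Section LinMap.
Variables (V W : lmodType k) (f : V -> W).
Hypothesis f_lin : lin_map f.

Lemma lin_map0 : f 0 = 0.
Proof.
have := f_lin 1 0 0; rewrite !scale1r addr0 => f00.
by apply: (addrI (f 0)); rewrite addr0 -f00.
Qed.

Lemma lin_mapD x y : f (x + y) = f x + f y.
Proof. by have := f_lin 1 x y; rewrite !scale1r. Qed.

Lemma lin_mapZ c x : f (c *: x) = c *: f x.
Proof. by have := f_lin c x 0; rewrite !addr0 lin_map0 addr0. Qed.

Lemma lin_map_sum (I : Type) (s : seq I) (P : pred I) (F : I -> V) :
  f (\sum_(i <- s | P i) F i) = \sum_(i <- s | P i) f (F i).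
Proof. exact: (big_morph _ lin_mapD lin_map0). Qed.

End LinMap.

Lemma teq_map (V W V' W' : lmodType k) (phi : V -> V') (psi : W -> W') s t :
  lin_map phi -> lin_map psi -> teq s t ->
  teq [seq (phi p.1, psi p.2) | p <- s] [seq (phi p.1, psi p.2) | p <- t].
Proof.
move=> phi_lin psi_lin st U g [g1 g2]; rewrite !big_map.
apply: (st U (fun x y => g (phi x) (psi y))).
by split=> [y|x] c u v /=; [rewrite phi_lin; apply: g1 | rewrite psi_lin; apply: g2].
Qed.

Lemma heps0 (A : algType k) (hA : hopf A) : heps hA 0 = 0.
Proof.
have := eps_lin hA 1 0 0; rewrite scale1r addr0 mul1r => eps00.
by apply: (addrI (heps hA 0)); rewrite addr0 -eps00.
Qed.

Lemma heps_alg (A : algType k) (hA : hopf A) c : heps hA c%:A = c.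
Proof. by have := eps_lin hA c 1 0; rewrite addr0 heps0 addr0 eps_one mulr1. Qed.

Section HopfMap.
Variables (A H : algType k) (hA : hopf A) (hH : hopf H) (f : A -> H).
Hypothesis f_hopf : hopf_map hA hH f.

Lemma hopf_map_convSl x :
  \sum_(p <- hdelta hA x) hS hH (f p.1) * f p.2 = (heps hA x)%:A.
Proof.
case: f_hopf => _ _ _ fD fe.
rewrite -fe -antipode_l (fD x H (fun u v => hS hH u * v)) ?big_map //.
split=> [y|u] c u1 v1 /=; last by rewrite mulrDr scalerAr.
by rewrite (S_lin hH) mulrDl scalerAl.
Qed.

Lemma hopf_map_convSr x :
  \sum_(p <- hdelta hA x) f p.1 * f (hS hA p.2) = (heps hA x)%:A.
Proof.
case: f_hopf => f_lin fM f1 _ _.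
under eq_bigr => p _ do rewrite -fM.
by rewrite -(lin_map_sum f_lin) antipode_r (lin_mapZ f_lin) f1.
Qed.

(* Both sides are (S_H o f) * f * (f o S_A) in the convolution algebra, computed
   by coassociativity from the two one-sided inverse identities above. *)
Lemma hopf_map_antipode a : hS hH (f a) = f (hS hA a).
Proof.
case: f_hopf => f_lin _ _ _ _.
have SH_lin := S_lin hH; have SA_lin := S_lin hA.
have trilin_conv : trilin (fun x y z => hS hH (f x) * f y * f (hS hA z)).
  split; last split=> [x z|x y] c u v /=.
  - by move=> y z c u v /=; rewrite f_lin SH_lin !mulrDl !scalerAl.
  - by rewrite f_lin mulrDr mulrDl scalerAl scalerAr.
  - by rewrite SA_lin f_lin mulrDr scalerAr.
have := coassoc hA a trilin_conv; rewrite !big_allpairs_dep /=.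
have -> : \sum_(p <- hdelta hA a) \sum_(q <- hdelta hA p.1)
    hS hH (f q.1) * f q.2 * f (hS hA p.2) = f (hS hA a).
  under eq_bigr => p _ do
    rewrite -mulr_suml hopf_map_convSl mulr_algl -(lin_mapZ f_lin) -(lin_mapZ SA_lin).
  by rewrite -(lin_map_sum f_lin) -(lin_map_sum SA_lin) counit_l.
have -> // : \sum_(p <- hdelta hA a) \sum_(q <- hdelta hA p.2)
    hS hH (f p.1) * f q.1 * f (hS hA q.2) = hS hH (f a).
under eq_bigr => p _ do
  (under eq_bigr => q _ do rewrite -mulrA;
   rewrite -mulr_sumr hopf_map_convSr mulr_algr -(lin_mapZ SH_lin) -(lin_mapZ f_lin)).
by rewrite -(lin_map_sum SH_lin) -(lin_map_sum f_lin) counit_r.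
Qed.

Lemma hopf_subalg_image (D : A -> Prop) :
  hopf_subalg hA D -> hopf_subalg hH (fun h => exists2 x, D x & h = f x).
Proof.
case: (f_hopf) => f_lin fM f1 fD _ [D1 DL DM DS DD]; split.
- by exists 1; rewrite ?f1.
- move=> c _ _ [x Dx ->] [y Dy ->].
  by exists (c *: x + y); [apply: DL | rewrite f_lin].
- by move=> _ _ [x Dx ->] [y Dy ->]; exists (x * y); [apply: DM | rewrite fM].
- by move=> _ [x Dx ->]; exists (hS hA x); [apply: DS | rewrite hopf_map_antipode].
move=> _ [x Dx ->]; have [t [tD tE]] := DD x Dx.
exists [seq (f p.1, f p.2) | p <- t]; split.
  by move=> _ /mapP[p /tD[Dp1 Dp2] ->]; split; [exists p.1 | exists p.2].
by move=> U g g_bilin; rewrite (fD x U g g_bilin); apply: teq_map.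
Qed.

Lemma central_set_image (D : A -> Prop) :
  (forall h, exists a, f a = h) -> central_set D ->
  central_set (fun h => exists2 x, D x & h = f x).
Proof.
case: f_hopf => _ fM _ _ _ f_surj Dcent _ h [x Dx ->].
by have [a <-] := f_surj h; rewrite -!fM Dcent.
Qed.

Lemma trivial_hopf_center_image_counit (D : A -> Prop) x :
  (forall h, exists a, f a = h) ->
  is_hopf_center hH (fun h => exists c : k, h = c%:A) ->
  hopf_subalg hA D -> central_set D -> D x -> f x = (heps hA x)%:A.
Proof.
move=> f_surj [_ _ HZ_max] Dsub Dcent Dx.
have [|c fx] := HZ_max _ (hopf_subalg_image Dsub) (central_set_image f_surj Dcent) (f x).
  by exists x.
case: f_hopf => _ _ _ _ fe.
by rewrite -fe fx heps_alg.
Qed.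

End HopfMap.

Definition coinvariant (A H : algType k) (hA : hopf A) (pi : A -> H) (a : A) :=
  teq [seq (p.1, pi p.2) | p <- hdelta hA a] [:: (a, 1 : H)].

Lemma coinvariant_counit_image (A H : algType k) (hA : hopf A) (pi : A -> H)
    (a : A) (t : seq (A * A)) :
  lin_map pi -> teq (hdelta hA a) t ->
  (forall p, p \in t -> pi p.2 = (heps hA p.2)%:A) -> coinvariant hA pi a.
Proof.
move=> pi_lin tE pi_eps U g [g1 g2]; rewrite big_cons big_nil addr0 big_map /=.
rewrite (tE U (fun x y => g x (pi y))); last first.
  by split=> [y|x] c u v /=; [apply: g1 | rewrite pi_lin; apply: g2].
rewrite big_seq.
under eq_bigr => p /pi_eps -> do rewrite (lin_mapZ (g2 _)) -(lin_mapZ (g1 _)).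
rewrite -(lin_map_sum (g1 _)) -big_seq -(tE A (fun x y => heps hA y *: x)) ?counit_r //.
split=> [y|x] c u v /=; first by rewrite scalerDr !scalerA mulrC.
by rewrite eps_lin scalerDl scalerA.
Qed.

Lemma hopf_subalg_ext (A : algType k) (hA : hopf A) (C C' : A -> Prop) :
  (forall a, C a <-> C' a) -> hopf_subalg hA C -> hopf_subalg hA C'.
Proof.
move=> CC' [C1 CL CM CS CD]; split.
- exact/CC'.
- by move=> c a b /CC' Ca /CC' Cb; apply/CC'/CL.
- by move=> a b /CC' Ca /CC' Cb; apply/CC'/CM.
- by move=> a /CC' Ca; apply/CC'/CS.
move=> a /CC' /CD[t [tC tE]]; exists t; split=> // p /tC[Cp1 Cp2].
by split; apply/CC'.
Qed.

Lemma hopf_subalg_range (B A : algType k) (hB : hopf B) (hA : hopf A) (iota : B -> A) :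
  hopf_map hB hA iota -> hopf_subalg hA (fun a => exists b, a = iota b).
Proof.
move=> iota_hopf.
have B_full : hopf_subalg hB (fun _ => True).
  by split=> // b _; exists (hdelta hB b); split=> // U g _.
apply: hopf_subalg_ext (hopf_subalg_image iota_hopf B_full) => a.
by split=> [[b _ ->] | [b ->]]; exists b.
Qed.

End HopfMaps.

Theorem corollary2p12 (k : fieldType) (B A H : algType k)
    (hB : hopf B) (hA : hopf A) (hH : hopf H) (iota : B -> A) (pi : A -> H) :
  exact_seq hB hA hH iota pi ->
  central_seq iota ->
  noetherian A ->
  is_hopf_center hH (fun h : H => exists c : k, h = c%:A) ->
  is_hopf_center hA (fun a : A => exists b : B, a = iota b).
Proof.
move=> [[iota_hopf pi_hopf _] [pi_surj _ B_coinv]] B_central _ HZ_trivial.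
split; first exact: hopf_subalg_range iota_hopf.
  by move=> _ a [b ->]; apply: B_central.
move=> D Dsub Dcent a Da; apply/B_coinv.
have [_ _ _ _ /(_ a Da)[t [tD tE]]] := Dsub.
have [pi_lin _ _ _ _] := pi_hopf.
apply: (coinvariant_counit_image pi_lin tE) => p /tD[_ Dp2].
exact: trivial_hopf_center_image_counit pi_surj HZ_trivial Dsub Dcent Dp2.
Qed.
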